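(* (a) There exist an absolute constant $C_0$ and, for every $n\ge1$, a deterministic exploration algorithm which, knowing only $n$ (and neither $k$ nor any bound on the period), solves PVG-Exploration of every feasible PV graph with distinct site identifiers and $n$ sites (homogeneous or heterogeneous, arbitrary routes), performing at most $C_0\,k\,p^2$ moves, where $k$ is the number of carriers and $p$ the period. (b) There exist an absolute constant $C_0$ and, for every $n\ge1$, a deterministic exploration algorithm which, knowing only $n$ and that the system is homogeneous, solves PVG-Exploration of every feasible homogeneous PV graph with distinct site identifiers and $n$ sites, performing at most $C_0\,k\,p$ moves.
   Context: A PV (periodically varying) system consists of a finite set $S$ of $n$ sites and a set $C$ of $k\le n$ carriers. Each carrier $c$ has a distinct identifier and a route $\pi(c)=\langle x_0,\dots,x_{p(c)-1}\rangle$, a finite sequence of sites (repetitions allowed) of length $p(c)\ge 1$ called its period; $\pi(c)[j]=x_{j \bmod p(c)}$. At each time $t\in\mathbb{N}$ carrier $c$ is at site $\pi(c)[t]$ and moves to $\pi(c)[t+1]$. The PV graph $\vec G_R$ is the directed edge-labelled multigraph on $S$ with edges $(x_i,x_{i+1},i)$, $0\le i<p(c)$, for every carrier. Its period is $p=\max_{c}p(c)$; it is homogeneous if all periods are equal, heterogeneous otherwise. In a system with ids the sites have distinct identifiers. An exploring agent is injected at time $0$ at a site of $\mathrm{start}(\vec G_R)=\{\pi(c)[0]:c\in C\}$. If at time $t$ the agent is at site $x$, it must either choose a carrier $c$ with $\pi(c)[t]=x$ and ride with it to $\pi(c)[t+1]$ (one move), or halt and exit; it cannot wait at a site. At each time the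 agent observes the identifiers of the carriers present at its current site and the identifier of that site. An exploration algorithm is a deterministic rule mapping the agent's a priori knowledge and history of observations to its next action. An algorithm solves PVG-Exploration of $\vec G_R$ if from every injection site the agent visits every site of $S$ and halts after finitely many moves. $\vec G_R$ is feasible if from the starting point of every carrier there exists a walk realizable by the agent (riding carriers and switching between carriers at the same site at the same time) visiting all sites. *)

From mathcomp Require Import all_boot.
Set Implicit Arguments. Unset Strict Implicit. Unset Printing Implicit Defensive.

Definition carrier := (nat * seq nat)%type.
Definition cid (c : carrier) : nat := c.1.
Definition route (c : carrier) : seq nat := c.2.

Record pvsys := PVSys { sites : seq nat; carriers : seq carrier }.

Definition cperiod (c : carrier) : nat := size (route c).

Definition cpos (c : carrier) (t : nat) : nat := nth 0 (route c) (t %% cperiod c).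

Definition wf_pvsys (G : pvsys) : Prop :=
  [/\ uniq (sites G), uniq (map cid (carriers G)),
      all (fun c => (0 < cperiod c) && all (fun x => x \in sites G) (route c)) (carriers G)
    & size (carriers G) <= size (sites G)].

Definition nsites (G : pvsys) : nat := size (sites G).
Definition ncarriers (G : pvsys) : nat := size (carriers G).

Definition period (G : pvsys) : nat := \max_(c <- carriers G) cperiod c.

Definition homogeneous (G : pvsys) : Prop :=
  forall c d, c \in carriers G -> d \in carriers G -> cperiod c = cperiod d.

Definition start (G : pvsys) : seq nat := [seq cpos c 0 | c <- carriers G].

(* identifiers of carriers present at site x at time t (as a sorted list,
   i.e. as a set of identifiers) *)
Definition present (G : pvsys) (t x : nat) : seq nat :=
  sort leq [seq cid c | c <- carriers G & cpos c t == x].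

Definition carrier_of (G : pvsys) (i : nat) : carrier :=
  nth (0, [::]) (carriers G) (find (fun c => cid c == i) (carriers G)).

Definition next_pos (G : pvsys) (i t : nat) : nat := cpos (carrier_of G i) t.+1.

(* Observation: (site identifier, identifiers of carriers present). *)
Definition obs := (nat * seq nat)%type.

(* Action: Some i = ride carrier i; None = halt and exit. An exploration
   algorithm (for a fixed a priori knowledge) maps histories of observations
   (time 0 .. current time) to actions. *)
Definition algorithm := seq obs -> option nat.

(* Execution: history of observations up to time t and current position,
   or None if the agent has stopped (halted or made an illegal choice) earlier. *)
Fixpoint run (G : pvsys) (A : algorithm) (x0 : nat) (t : nat)
  : option (seq obs * nat) :=
  match t with
  | 0 => Some ([:: (x0, present G 0 x0)], x0)
  | t'.+1 =>
    match run G A x0 t' with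
    | Some (h, x) =>
      match A h with
      | Some i => if i \in present G t' x then
                    let y := next_pos G i t' in Some (rcons h (y, present G t y), y)
                  else None
      | None => None
      end
    | None => None
    end
  end.

Definition explores_within (G : pvsys) (A : algorithm) (x0 bound : nat) : Prop :=
  exists T h x, [/\ run G A x0 T = Some (h, x), A h = None,
                    {subset sites G <= map fst h} & T <= bound].

Definition solves_within (G : pvsys) (A : algorithm) (bound : nat) : Prop :=
  forall x0, x0 \in start G -> explores_within G A x0 bound.

Fixpoint walk (G : pvsys) (t x : nat) (cs : seq nat) : option (seq nat) :=
  match cs with
  | [::] => Some [:: x]
  | i :: cs' => if i \in present G t x then
                  omap (cons x) (walk G t.+1 (next_pos G i t) cs')
                else None
  end.

Definition feasible (G : pvsys) : Prop :=
  forall c, c \in carriers G ->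
    exists cs vs, walk G 0 (cpos c 0) cs = Some vs /\ {subset sites G <= vs}.

From mathcomp Require Import all_boot zify.
Set Implicit Arguments. Unset Strict Implicit. Unset Printing Implicit Defensive.

(* The explorer halts as soon as it has observed n distinct sites, and
   otherwise runs a depth-first search over carriers with a guess P of a
   "meet bound": a B such that any two carriers that ever meet do so within
   every window of B consecutive steps (p^2 in general, via the product of
   the periods, and p in the homogeneous case).  The agent rides a carrier,
   jumps onto any unvisited carrier it sees, declares its rider finished
   after P + 1 steps without news, and then returns to the parent carrier,
   waiting at most P steps for it; a missed parent refutes the guess, which
   is then doubled and the search restarted.

   An
   invariant with an amortized time budget shows that a guess of 2B or more
   only arises after all sites are seen, and that otherwise the time is
   below 44 k B; the theorem follows with B = p^2 and B = p. *)

Lemma uniq_map_inj_in (T U : eqType) (f : T -> U) (s : seq T) :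
  uniq (map f s) -> {in s &, injective f}.
Proof.
elim: s => //= a s IH /andP[Ha Hs] x y.
rewrite !inE => /orP[/eqP->|Hx] /orP[/eqP->|Hy] Hf //.
- by rewrite Hf map_f in Ha.
- by rewrite -Hf map_f in Ha.
- exact: IH.
Qed.

Lemma residue_in_window L a r : 0 < L ->
  exists s, [/\ a <= s, s < a + L & s = r %[mod L]].
Proof.
move=> HL; have Ea := divn_eq a L; have Ha := ltn_pmod a HL.
have Hr := ltn_pmod r HL.
case: (leqP (a %% L) (r %% L)) => Hc.
- exists (a %/ L * L + r %% L); split; [lia | lia | by rewrite modnMDl modn_mod].
- exists ((a %/ L).+1 * L + r %% L); rewrite mulSn.
  split; [lia | lia | by rewrite -mulSn modnMDl modn_mod].
Qed.

Definition ids (G : pvsys) : seq nat := map cid (carriers G).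
Definition pos (G : pvsys) (i t : nat) : nat := cpos (carrier_of G i) t.
Definition per (G : pvsys) (i : nat) : nat := cperiod (carrier_of G i).

Section Carriers.
Variable G : pvsys.
Hypothesis ids_uniq : uniq (ids G).

Lemma carrier_ofE c : c \in carriers G -> carrier_of G (cid c) = c.
Proof.
move=> Hc; have Hhas : has (fun c' => cid c' == cid c) (carriers G).
  by apply/hasP; exists c.
apply: (uniq_map_inj_in ids_uniq) => //; first by rewrite mem_nth // -has_find.
exact/eqP/(nth_find _ Hhas).
Qed.

Lemma carrier_of_in i : i \in ids G -> carrier_of G i \in carriers G.
Proof. by case/mapP=> c Hc ->; rewrite carrier_ofE. Qed.

Lemma mem_present t x i :
  (i \in present G t x) = (i \in ids G) && (pos G i t == x).
Proof.
rewrite /present mem_sort; apply/mapP/andP.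
- case=> c; rewrite mem_filter => /andP[/eqP Hx Hc] ->.
  by rewrite map_f // /pos carrier_ofE // Hx.
- case=> Hi /eqP Hx; case/mapP: (Hi) => c Hc Ei; exists c => //.
  by rewrite mem_filter Hc andbT -Hx Ei /pos carrier_ofE.
Qed.

End Carriers.

Lemma pos_sites G i t : wf_pvsys G -> i \in ids G -> pos G i t \in sites G.
Proof.
case=> _ Hu Hall _ /(carrier_of_in Hu) Hc.
have /andP[Hp /allP Hr] := allP Hall _ Hc.
by apply: Hr; rewrite /pos /cpos mem_nth // ltn_pmod.
Qed.

Lemma per_bounds G i : wf_pvsys G -> i \in ids G -> 0 < per G i <= period G.
Proof.
case=> _ Hu Hall _ /(carrier_of_in Hu) Hc; have /andP[Hp _] := allP Hall _ Hc.
by rewrite Hp (leq_bigmax_seq (P := predT) (F := cperiod) _ Hc).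
Qed.

Lemma pos_mod G i t1 t2 d :
  per G i %| d -> t1 = t2 %[mod d] -> pos G i t1 = pos G i t2.
Proof.
move=> Hd Ht; rewrite /pos /cpos; congr nth.
by rewrite -(modn_dvdm t1 Hd) -(modn_dvdm t2 Hd) Ht.
Qed.

(* Carriers i and j meet if they are at the same site at some time; the
   agent can switch between carriers exactly when they meet. *)
Definition meet (G : pvsys) (i j : nat) : Prop := exists t, pos G i t = pos G j t.

Fixpoint meet_chain (G : pvsys) (c : nat) (s : seq nat) : Prop :=
  if s is q :: s' then meet G c q /\ meet_chain G q s' else True.

Inductive linked (G : pvsys) : nat -> nat -> Prop :=
  | linked_refl i : linked G i i
  | linked_step i j k : j \in ids G -> meet G i j -> linked G j k -> linked G i k.

(* B bounds a common multiple of the periods of any two carriers, so that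
   any two carriers that meet do so within every window of B steps. *)
Definition meet_bound (G : pvsys) (B : nat) : Prop :=
  forall i j, i \in ids G -> j \in ids G ->
    exists L, [/\ 0 < L, per G i %| L, per G j %| L & L <= B].

Lemma meet_bound_mono G B B' : B <= B' -> meet_bound G B -> meet_bound G B'.
Proof.
move=> HB H i j Hi Hj; have [L [? ? ? HL]] := H i j Hi Hj.
by exists L; split => //; apply: leq_trans HB.
Qed.

(* Meetings recur with any common multiple L of the two periods. *)
Lemma meet_in_window G i j L a : 0 < L -> per G i %| L -> per G j %| L ->
  meet G i j -> exists u, [/\ a <= u, u < a + L & pos G i u = pos G j u].
Proof.
move=> HL Hi Hj [m Hm]; have [u [H1 H2 H3]] := residue_in_window a m HL.
by exists u; rewrite (pos_mod Hi H3) (pos_mod Hj H3).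
Qed.

(* Hence two meeting carriers that stay apart for P + 1 consecutive steps
   witness that P is below the meet bound: this is what refutes a guess. *)
Lemma apart_window_small G B i j a P : meet_bound G B ->
  i \in ids G -> j \in ids G -> meet G i j ->
  (forall u, a <= u <= a + P -> pos G i u != pos G j u) -> P < B.
Proof.
move=> HB Hi Hj Hm Hapart; have [L [HL Hdi Hdj HLB]] := HB i j Hi Hj.
have [u [H1 H2 H3]] := meet_in_window a HL Hdi Hdj Hm.
rewrite ltnNge; apply/negP => HPB.
have Hu : a <= u <= a + P by lia.
by move: (Hapart u Hu); rewrite H3 eqxx.
Qed.

Lemma meet_bound_square G : wf_pvsys G -> meet_bound G (period G ^ 2).
Proof.
move=> Hwf i j Hi Hj; exists (per G i * per G j).
have /andP[Hi0 Hip] := per_bounds Hwf Hi; have /andP[Hj0 Hjp] := per_bounds Hwf Hj.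
by rewrite muln_gt0 Hi0 Hj0 dvdn_mulr // dvdn_mull // -mulnn leq_mul.
Qed.

Lemma meet_bound_homogeneous G :
  wf_pvsys G -> homogeneous G -> meet_bound G (period G).
Proof.
move=> Hwf Hhom i j Hi Hj; exists (per G i).
have Hu : uniq (ids G) by case: Hwf.
have /andP[Hi0 Hip] := per_bounds Hwf Hi.
by rewrite /per (Hhom _ _ (carrier_of_in Hu Hj) (carrier_of_in Hu Hi)).
Qed.

(* State of the depth-first search over carriers: the current guess of the
   meet bound, the carriers visited, the stack of carriers to return to, the
   carrier being ridden, whether the agent is returning to the top of the
   stack, and a step counter (steps without news, or steps waited). *)
Record dfs_state := DfsState {
  guess : nat; visited : seq nat; stack : seq nat;
  rider : nat; returning : bool; counter : nat }.

Definition restart (s : dfs_state) : dfs_state :=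
  DfsState (2 * guess s) [:: rider s] [::] (rider s) false 0.

Definition return_step (s : dfs_state) (pr : seq nat) (w : nat) : dfs_state :=
  if stack s is q :: stk then
    if q \in pr then DfsState (guess s) (visited s) stk q false 0
    else if w < guess s then DfsState (guess s) (visited s) (stack s) (rider s) true w.+1
    else restart s
  else restart s.

Definition dfs_step (s : dfs_state) (pr : seq nat) : dfs_state :=
  if returning s then return_step s pr (counter s) else
  if [seq d <- pr | d \notin visited s] is d :: _ then
    DfsState (guess s) (d :: visited s) (rider s :: stack s) d false 0
  else if counter s < guess s then
    DfsState (guess s) (visited s) (stack s) (rider s) false (counter s).+1
  else return_step s pr 0.

Definition init_state (pr : seq nat) : dfs_state :=
  DfsState 1 [:: head 0 pr] [::] (head 0 pr) false 0.

Definition explorer (n : nat) : algorithm := fun h =>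
  if h is o :: h' then
    if n <= size (undup (map fst h)) then None
    else Some (rider (foldl (fun s o => dfs_step s o.2) (init_state o.2) h'))
  else None.

Section Simulation.
Variables (G : pvsys) (x0 : nat).

Fixpoint simulate (t : nat) : dfs_state * nat :=
  if t is t'.+1 then
    let (s, _) := simulate t' in
    let y := pos G (rider s) t in (dfs_step s (present G t y), y)
  else (init_state (present G 0 x0), x0).

Definition state_at (t : nat) : dfs_state := (simulate t).1.
Definition site_at (t : nat) : nat := (simulate t).2.

Lemma site_atS t : site_at t.+1 = pos G (rider (state_at t)) t.+1.
Proof. by rewrite /site_at /state_at /=; case: (simulate t). Qed.

Lemma state_atS t :
  state_at t.+1 = dfs_step (state_at t) (present G t.+1 (site_at t.+1)).
Proof. by rewrite site_atS /site_at /state_at /=; case: (simulate t). Qed.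

Fixpoint later_obs (t : nat) : seq obs :=
  if t is t'.+1 then rcons (later_obs t') (site_at t, present G t (site_at t))
  else [::].

Definition history (t : nat) : seq obs := (x0, present G 0 x0) :: later_obs t.

Lemma replay_history t :
  foldl (fun s o => dfs_step s o.2) (init_state (present G 0 x0)) (later_obs t)
  = state_at t.
Proof. by elim: t => //= t IH; rewrite foldl_rcons IH state_atS. Qed.

Lemma mem_history t y :
  reflect (exists2 u, u <= t & site_at u = y) (y \in map fst (history t)).
Proof.
elim: t => [|t IH].
  rewrite inE; apply: (iffP eqP) => [->|[u]]; first by exists 0.
  by rewrite leqn0 => /eqP->.
have -> : map fst (history t.+1) = rcons (map fst (history t)) (site_at t.+1).
  by rewrite /history /= map_rcons.
rewrite mem_rcons inE; apply: (iffP orP) => [[/eqP->|/IH[u Hu <-]]|[u Hu Hy]].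
- by exists t.+1.
- by exists u => //; apply: leqW.
- rewrite leq_eqVlt in Hu; case/orP: Hu => [/eqP Eu|Hu].
    by left; rewrite -Hy Eu.
  by right; apply/IH; exists u.
Qed.

Lemma run_explorer n t :
  (forall u, u <= t -> rider (state_at u) \in present G u (site_at u)) ->
  (forall u, u < t -> size (undup (map fst (history u))) < n) ->
  run G (explorer n) x0 t = Some (history t, site_at t).
Proof.
elim: t => [|t IH] Hrider Hfew //=.
rewrite IH; last 2 first.
- by move=> u Hu; apply: Hrider; apply: leqW.
- by move=> u Hu; apply: Hfew; apply: ltnW.
rewrite /explorer /history /= leqNgt Hfew //= replay_history Hrider //.
by rewrite site_atS.
Qed.

End Simulation.

Section Closure.
Variable G : pvsys.
Hypothesis ids_uniq : uniq (ids G).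

Definition meet_closed (V : seq nat) : Prop :=
  forall v j, v \in V -> j \in ids G -> meet G v j -> j \in V.

Lemma linked_closed V i k : meet_closed V -> linked G i k -> i \in V -> k \in V.
Proof. by move=> HV; elim=> // a b c Hb Hm _ IH Ha; apply/IH/(HV a). Qed.

Lemma walk_closed V cs : meet_closed V ->
  forall t x vs i, i \in V -> pos G i t = x -> walk G t x cs = Some vs ->
  forall y, y \in vs -> exists2 j, j \in V & exists u, pos G j u = y.
Proof.
move=> HV; elim: cs => [|c cs IH] t x vs i Hi Hx /=.
  by case=> <- y; rewrite inE => /eqP ->; exists i => //; exists t.
case: ifP => // Hc; case E: (walk G t.+1 (next_pos G c t) cs) => [vs'|] //= [<-] y.
rewrite mem_present // in Hc; case/andP: Hc => Hc /eqP Hcx.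
have HcV : c \in V by apply: (HV i) => //; exists t; rewrite Hx Hcx.
rewrite inE => /orP[/eqP ->|Hy]; first by exists i => //; exists t.
exact: (IH _ _ _ _ HcV _ E).
Qed.

Variable x0 : nat.

Definition covered (V : seq nat) (v u : nat) : Prop :=
  site_at G x0 u = pos G v u /\
  forall j, j \in ids G -> pos G j u = pos G v u -> j \in V.

Definition finished (t P : nat) (V : seq nat) (v : nat) : Prop :=
  exists a, a + P <= t /\ forall u, a <= u <= a + P -> covered V v u.

Definition all_seen (t : nat) : Prop :=
  forall y, y \in sites G -> exists2 u, u <= t & site_at G x0 u = y.

Lemma finished_mono t t' P V V' v : t <= t' -> {subset V <= V'} ->
  finished t P V v -> finished t' P V' v.
Proof.
move=> Ht HV [a [Ha Hc]]; exists a; split; first exact: leq_trans Ha Ht.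
by move=> u /Hc[H1 H2]; split => // j Hj Hp; apply/HV/H2.
Qed.

Lemma all_seen_mono t t' : t <= t' -> all_seen t -> all_seen t'.
Proof. by move=> Ht H y /H[u Hu <-]; exists u => //; apply: leq_trans Ht. Qed.

Lemma finished_meet t P V v j : meet_bound G P -> v \in ids G -> j \in ids G ->
  finished t P V v -> meet G v j -> j \in V.
Proof.
move=> HB Hv Hj [a [_ Hc]] Hm; have [L [HL Hdv Hdj HLB]] := HB v j Hv Hj.
have [u [H1 H2 H3]] := meet_in_window a HL Hdv Hdj Hm.
have Hu : a <= u <= a + P by lia.
by have [_ Hcov] := Hc u Hu; apply: Hcov; rewrite ?H3.
Qed.

Lemma finished_route_seen t P V v u : meet_bound G P -> v \in ids G ->
  finished t P V v -> exists2 u', u' <= t & site_at G x0 u' = pos G v u.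
Proof.
move=> HB Hv [a [Ha Hc]]; have [L [HL Hdv _ HLB]] := HB v v Hv Hv.
have [u' [H1 H2 H3]] := residue_in_window a u HL.
have Hu' : a <= u' <= a + P by lia.
have [Hsite _] := Hc u' Hu'.
by exists u'; [lia | rewrite Hsite; apply: pos_mod Hdv H3].
Qed.

Lemma all_seen_of_finished t P V c i0 : meet_bound G P ->
  {subset V <= ids G} -> (forall v, v \in V -> finished t P V v) ->
  c \in V -> linked G c i0 ->
  (exists cs vs, walk G 0 (pos G i0 0) cs = Some vs /\ {subset sites G <= vs}) ->
  all_seen t.
Proof.
move=> HB HV Hf Hc Hlink [cs [vs [Hw Hs]]].
have Hcl : meet_closed V.
  by move=> v j Hv Hj; apply: finished_meet HB (HV v Hv) Hj (Hf v Hv).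
move=> y /Hs Hy; have Hi0 := linked_closed Hcl Hlink Hc.
have [j Hj [u <-]] := walk_closed Hcl Hi0 (erefl _) Hw Hy.
exact: finished_route_seen HB (HV j Hj) (Hf j Hj).
Qed.

End Closure.

Section Invariant.
Variables (G : pvsys) (x0 i0 B : nat).
Hypothesis ids_uniq : uniq (ids G).

(* Amortized time bound: the invariant t + reserve s <= potential s holds
   along the search.  Visiting a new carrier adds 2 * (2P + 3) to the
   potential and puts 2P + 3 into the stack part of the reserve; the stack
   entry pays for the at most 2P + 2 steps spent finishing the carrier and
   returning from it, and the term 10kP, doubled at each restart, pays for
   the steps taken under the previous guesses. *)
Definition reserve (s : dfs_state) : nat :=
  10 * size (ids G) + (2 * guess s + 3) * (size (stack s) + 2).

Definition potential (s : dfs_state) : nat :=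
  10 * size (ids G) * guess s + (2 * guess s + 3) * (2 * size (visited s)) +
  (if returning s then guess s + counter s else counter s).

Record dfs_invariant (t : nat) (s : dfs_state) : Prop := {
  inv_guess : 0 < guess s;
  inv_counter : counter s <= guess s;
  inv_rider : rider s \in ids G;
  inv_visited : {subset visited s <= ids G};
  inv_visited_uniq : uniq (visited s);
  inv_rider_visited : rider s \in visited s;
  inv_stack_visited : {subset stack s <= visited s};
  inv_stack_uniq : uniq (rider s :: stack s);
  inv_on_rider : pos G (rider s) t = site_at G x0 t;
  inv_stack_meets : meet_chain G (rider s) (stack s);
  inv_linked : linked G (rider s) i0;
  inv_finished : forall v, v \in visited s -> v \notin rider s :: stack s ->
    finished G x0 t (guess s) (visited s) v;
  inv_scanning : ~~ returning s -> counter s <= t.+1 /\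
    forall u, t.+1 - counter s <= u <= t -> covered G x0 (visited s) (rider s) u;
  inv_returning : returning s ->
    [/\ finished G x0 t (guess s) (visited s) (rider s), 0 < counter s,
        counter s <= t.+1, stack s != [::] &
        forall u, t.+1 - counter s <= u <= t ->
          pos G (head 0 (stack s)) u != pos G (rider s) u];
  inv_budget : t + reserve s <= potential s;
  inv_seen : guess s < 2 * B \/ all_seen G x0 t }.

Lemma inv_init : i0 \in ids G -> pos G i0 0 = x0 -> 0 < B ->
  dfs_invariant 0 (state_at G x0 0).
Proof.
move=> Hi0 Hx0 HB.
have Hin : i0 \in present G 0 x0 by rewrite mem_present // Hi0 Hx0 eqxx.
have Hh : head 0 (present G 0 x0) \in present G 0 x0.
  by move: Hin; case: (present G 0 x0) => //= a l _; rewrite mem_head.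
rewrite mem_present // in Hh; case/andP: Hh => Hc /eqP Hcx.
rewrite /state_at /=; set c := head 0 _ in Hc Hcx *.
have Hk : 0 < size (ids G) by case: (ids G) Hc.
constructor => //=; rewrite /reserve /potential /= ?inE //.
- by move=> v; rewrite inE => /eqP ->.
- by apply: (linked_step Hi0 _ (linked_refl _ _)); exists 0; rewrite Hcx.
- by move=> v ->.
- by move=> _; split => // u; lia.
- lia.
- by left; lia.
Qed.

Hypothesis meet_bound_B : meet_bound G B.
Hypothesis i0_walk :
  exists cs vs, walk G 0 (pos G i0 0) cs = Some vs /\ {subset sites G <= vs}.

Section Step.
Variables (t : nat) (s : dfs_state).
Hypothesis Is : dfs_invariant t s.
Hypothesis on_rider : site_at G x0 t.+1 = pos G (rider s) t.+1.

Let k := size (ids G).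
Let P := guess s.
Let c := rider s.
Let pr := present G t.+1 (site_at G x0 t.+1).

Lemma mem_pr j : (j \in pr) = (j \in ids G) && (pos G j t.+1 == pos G c t.+1).
Proof. by rewrite mem_present // on_rider. Qed.

Lemma visited_size : size (visited s) <= k.
Proof. exact: uniq_leq_size (inv_visited_uniq Is) (inv_visited Is). Qed.

Lemma inv_restart : P < B \/ all_seen G x0 t.+1 ->
  dfs_invariant t.+1 (restart s).
Proof.
move=> Hseen; have Hk := visited_size; have HP := inv_guess Is.
have Hc := inv_rider Is; have Hk0 : 0 < k by rewrite /k; case: (ids G) Hc.
have Hbud := inv_budget Is; have Hcnt := inv_counter Is.
constructor => //=; rewrite /reserve /potential /= ?inE ?eqxx //.
- by rewrite muln_gt0 HP.
- by move=> v; rewrite inE => /eqP ->.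
- exact: inv_linked Is.
- by move=> v ->.
- by move=> _; split => // u; lia.
- move: Hbud; rewrite /reserve /potential -/P -/k; case: (returning s) => /=; nia.
- by case: Hseen => [H|H]; [left; lia | right].
Qed.

Lemma inv_pop q K : stack s = q :: K -> q \in pr ->
  finished G x0 t.+1 P (visited s) c ->
  dfs_invariant t.+1 (DfsState P (visited s) K q false 0).
Proof.
move=> Hstk Hq Hfc; rewrite mem_pr in Hq; case/andP: Hq => Hq /eqP Hqc.
have Hsv := inv_stack_visited Is; rewrite Hstk in Hsv.
have Huq := inv_stack_uniq Is; rewrite Hstk in Huq.
have [Hcq Hch] : meet G c q /\ meet_chain G q K.
  by have := inv_stack_meets Is; rewrite Hstk.
have Hbud := inv_budget Is; have Hcnt := inv_counter Is.
constructor => //=; rewrite /reserve /potential /=.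
- exact: inv_guess Is.
- exact: inv_visited Is.
- exact: inv_visited_uniq Is.
- by apply: Hsv; rewrite mem_head.
- by move=> v Hv; apply: Hsv; rewrite inE Hv orbT.
- by case/andP: Huq.
- by rewrite on_rider Hqc.
- apply: (linked_step (inv_rider Is) _ (inv_linked Is)).
  by exists t.+1; rewrite Hqc.
- move=> v Hv Hn; case: (eqVneq v c) => [->|Hvc] //.
  apply: finished_mono (inv_finished Is Hv _) => //.
  by rewrite Hstk inE negb_or Hvc.
- by move=> _; split => // u; lia.
- move: Hbud; rewrite /reserve /potential Hstk -/P -/k /=.
  case: (returning s) => /=; nia.
- by case: (inv_seen Is) => [H|H]; [left | right; apply: all_seen_mono H].
Qed.

Lemma inv_push d : ~~ returning s -> d \in pr -> d \notin visited s ->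
  dfs_invariant t.+1
    (DfsState P (d :: visited s) (c :: stack s) d false 0).
Proof.
move=> Hscan Hd Hdv; rewrite mem_pr in Hd; case/andP: Hd => Hd /eqP Hdc.
have Hcv := inv_rider_visited Is; have Hsv := inv_stack_visited Is.
have Hbud := inv_budget Is; have Hcnt := inv_counter Is.
constructor => //=; rewrite /reserve /potential /=.
- exact: inv_guess Is.
- by move=> v; rewrite inE => /orP[/eqP ->|/(inv_visited Is)].
- by rewrite Hdv (inv_visited_uniq Is).
- by rewrite mem_head.
- by move=> v; rewrite !inE => /orP[/eqP ->|/Hsv ->]; rewrite ?Hcv orbT.
- have /= -> := inv_stack_uniq Is; rewrite andbT inE negb_or; apply/andP; split.
  + by apply: contraNneq Hdv => ->.
  + by apply: contraNN Hdv => /Hsv.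
- by rewrite on_rider Hdc.
- by split; [exists t.+1; rewrite Hdc | exact: inv_stack_meets Is].
- apply: (linked_step (inv_rider Is) _ (inv_linked Is)).
  by exists t.+1; rewrite Hdc.
- move=> v; rewrite inE => /orP[/eqP ->|Hv]; first by rewrite mem_head.
  rewrite inE negb_or => /andP[_ Hn]; apply: finished_mono (inv_finished Is Hv Hn) => //.
  by move=> z Hz; rewrite inE Hz orbT.
- by move=> _; split => // u; lia.
- move: Hbud; rewrite /reserve /potential -/P -/k (negbTE Hscan) /=; nia.
- by case: (inv_seen Is) => [H|H]; [left | right; apply: all_seen_mono H].
Qed.

Lemma inv_stay b w : w <= P ->
  (~~ b -> w <= t.+2 /\
     forall u, t.+2 - w <= u <= t.+1 -> covered G x0 (visited s) c u) ->
  (b -> [/\ finished G x0 t.+1 P (visited s) c, 0 < w, w <= t.+2,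
           stack s != [::] &
           forall u, t.+2 - w <= u <= t.+1 -> pos G (head 0 (stack s)) u != pos G c u]) ->
  t.+1 + reserve s <= potential (DfsState P (visited s) (stack s) c b w) ->
  dfs_invariant t.+1 (DfsState P (visited s) (stack s) c b w).
Proof.
move=> Hw Hscan Hret Hbud; constructor => //=.
- exact: inv_guess Is.
- exact: inv_rider Is.
- exact: inv_visited Is.
- exact: inv_visited_uniq Is.
- exact: inv_rider_visited Is.
- exact: inv_stack_visited Is.
- exact: inv_stack_uniq Is.
- exact: inv_stack_meets Is.
- exact: inv_linked Is.
- by move=> v Hv Hn; apply: finished_mono (inv_finished Is Hv Hn).
- by case: (inv_seen Is) => [H|H]; [left | right; apply: all_seen_mono H].
Qed.

Lemma covered_now : [seq d <- pr | d \notin visited s] = [::] ->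
  covered G x0 (visited s) c t.+1.
Proof.
move=> Hnone; split => // j Hj Hjc; apply/negPn/negP => Hjv.
have : j \in [seq d <- pr | d \notin visited s] by rewrite mem_filter Hjv mem_pr Hj Hjc eqxx.
by rewrite Hnone.
Qed.

Lemma inv_keep_scanning : ~~ returning s ->
  covered G x0 (visited s) c t.+1 -> counter s < P ->
  dfs_invariant t.+1 (DfsState P (visited s) (stack s) c false (counter s).+1).
Proof.
move=> Hscan Hcov Hw; have [Hwt Hcl] := inv_scanning Is Hscan.
apply: inv_stay => //.
- move=> _; split => // u Hu; case: (ltnP u t.+1) => Hut; first by apply: Hcl; lia.
  by have -> : u = t.+1 by lia.
- move: (inv_budget Is); rewrite /reserve /potential -/P -/k (negbTE Hscan) /=; lia.
Qed.

Lemma rider_finished : ~~ returning s -> counter s = P ->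
  covered G x0 (visited s) c t.+1 -> finished G x0 t.+1 P (visited s) c.
Proof.
move=> Hscan Hw Hcov; have [Hwt Hcl] := inv_scanning Is Hscan.
exists (t.+1 - P); split; first by lia.
move=> u Hu; case: (ltnP u t.+1) => Hut; first by apply: Hcl; lia.
by have -> : u = t.+1 by lia.
Qed.

Lemma inv_start_returning q K : ~~ returning s -> counter s = P ->
  finished G x0 t.+1 P (visited s) c -> stack s = q :: K -> q \notin pr ->
  dfs_invariant t.+1 (DfsState P (visited s) (stack s) c true 1).
Proof.
move=> Hscan Hw Hfc Hstk Hq.
have Hq0 : q \in ids G by apply/(inv_visited Is)/(inv_stack_visited Is); rewrite Hstk mem_head.
apply: inv_stay => //.
- exact: inv_guess Is.
- split; rewrite ?Hstk // => u Hu; have -> : u = t.+1 by lia.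
  by move: Hq; rewrite mem_pr Hq0.
- move: (inv_budget Is); rewrite /reserve /potential -/P -/k (negbTE Hscan) /=; lia.
Qed.

Lemma inv_keep_returning q K : returning s -> stack s = q :: K -> q \notin pr ->
  counter s < P ->
  dfs_invariant t.+1 (DfsState P (visited s) (stack s) c true (counter s).+1).
Proof.
move=> Hret Hstk Hq Hw; have [Hfc _ Hwt Hne Hapart] := inv_returning Is Hret.
have Hq0 : q \in ids G by apply/(inv_visited Is)/(inv_stack_visited Is); rewrite Hstk mem_head.
apply: inv_stay => //.
- split => //; first exact: finished_mono Hfc.
  move=> u Hu; case: (ltnP u t.+1) => Hut; first by apply: Hapart; lia.
  have -> : u = t.+1 by lia.
  by move: Hq; rewrite Hstk mem_pr Hq0.
- move: (inv_budget Is); rewrite /reserve /potential -/P -/k Hret /=; lia.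
Qed.

(* Returning: pop if the parent is present, keep waiting if the guess
   allows it, and otherwise the guess is refuted since c and its parent
   meet but stayed apart for P + 1 steps. *)
Lemma inv_step_returning : returning s -> dfs_invariant t.+1 (dfs_step s pr).
Proof.
move=> Hret; have [Hfc _ Hwt Hne Hapart] := inv_returning Is Hret.
rewrite /dfs_step Hret /return_step.
case Hstk: (stack s) Hne Hapart => [//|q K] _ Hapart /=.
case: ifP => Hq; first exact: inv_pop Hstk Hq (finished_mono _ _ Hfc).
have Hq0 : q \in ids G by apply/(inv_visited Is)/(inv_stack_visited Is); rewrite Hstk mem_head.
case: ifP => Hw; first by rewrite -Hstk; apply: inv_keep_returning Hret Hstk _ Hw; rewrite Hq.
have HwP : counter s = P by have := inv_counter Is; rewrite /P; lia.
have [Hcq _] : meet G c q /\ meet_chain G q K by have := inv_stack_meets Is; rewrite Hstk.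
apply: inv_restart; left.
apply: (apart_window_small (a := t.+1 - P) meet_bound_B (inv_rider Is) Hq0 Hcq) => u Hu.
case: (ltnP u t.+1) => Hut; first by rewrite eq_sym; apply: Hapart; lia.
have -> : u = t.+1 by lia.
by move: Hq; rewrite mem_pr Hq0 eq_sym => /negbT.
Qed.

(* Scanning: push a new carrier, keep scanning, or, the rider being
   finished, pop, start returning, or (empty stack) restart: then either the
   guess is small or the search is complete and all sites are seen. *)
Lemma inv_step_scanning : ~~ returning s -> dfs_invariant t.+1 (dfs_step s pr).
Proof.
move=> Hscan; rewrite /dfs_step (negbTE Hscan).
case Hnew: [seq d <- pr | d \notin visited s] => [|d l]; last first.
  have : d \in [seq d <- pr | d \notin visited s] by rewrite Hnew mem_head.
  by rewrite mem_filter => /andP[Hdv Hd]; apply: inv_push.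
have Hcov := covered_now Hnew.
case: ifP => Hw; first exact: inv_keep_scanning.
have HwP : counter s = P by have := inv_counter Is; rewrite /P; lia.
have Hfc := rider_finished Hscan HwP Hcov.
rewrite /return_step; case Hstk: (stack s) => [|q K] /=.
- apply: inv_restart; case: (ltnP P B) => HPB; [by left | right].
  apply: (all_seen_of_finished ids_uniq (meet_bound_mono HPB meet_bound_B) (inv_visited Is))
    (inv_rider_visited Is) (inv_linked Is) i0_walk.
  move=> v Hv; case: (eqVneq v c) => [->|Hvc] //.
  by apply: finished_mono (inv_finished Is Hv _) => //; rewrite Hstk inE.
- case: ifP => Hq; first exact: inv_pop Hstk Hq Hfc.
  rewrite (inv_guess Is) -Hstk.
  by apply: inv_start_returning Hscan HwP Hfc Hstk _; rewrite Hq.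
Qed.

End Step.

Lemma inv_step t : dfs_invariant t (state_at G x0 t) ->
  dfs_invariant t.+1 (state_at G x0 t.+1).
Proof.
move=> Is; rewrite state_atS.
have Hon := site_atS G x0 t.
case: (boolP (returning (state_at G x0 t))) => Hm.
- exact: inv_step_returning Is Hon Hm.
- exact: inv_step_scanning Is Hon Hm.
Qed.

Lemma inv_all : i0 \in ids G -> pos G i0 0 = x0 -> 0 < B ->
  forall t, dfs_invariant t (state_at G x0 t).
Proof. by move=> Hi0 Hx0 HB; elim=> [|t IH]; [exact: inv_init | exact: inv_step]. Qed.

End Invariant.

Lemma time_bound G x0 i0 B t s : dfs_invariant G x0 i0 B t s -> guess s < 2 * B ->
  t < 44 * size (ids G) * B.
Proof.
move=> Is HPB; have Hbud := inv_budget Is; have Hcnt := inv_counter Is.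
have HP := inv_guess Is; have Hk0 : 0 < size (ids G) by case: (ids G) (inv_rider Is).
have Ha : size (visited s) <= size (ids G).
  exact: uniq_leq_size (inv_visited_uniq Is) (inv_visited Is).
move: Hbud; rewrite /reserve /potential.
set k := size (ids G); set P := guess s; set a := size (visited s).
have Hmode : (if returning s then P + counter s else counter s) <= 2 * P.
  by case: (returning s); lia.
have Hka : (2 * P + 3) * (2 * a) <= (2 * P + 3) * (2 * k) by rewrite leq_mul2l leq_mul2l Ha !orbT.
have HkP : k * P < k * (2 * B) by rewrite ltn_pmul2l.
move: Hmode Hka HkP; set mt := (if _ then _ else _); nia.
Qed.

Section Exploration.
Variables (G : pvsys) (n x0 : nat).
Hypotheses (G_wf : wf_pvsys G) (G_sites : nsites G = n).

Lemma explores_when_all_seen T :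
  (forall u, rider (state_at G x0 u) \in present G u (site_at G x0 u)) ->
  all_seen G x0 T -> explores_within G (explorer n) x0 T.
Proof.
move=> Hrider Hseen; have Hu : uniq (ids G) by case: G_wf.
have Hsite u : site_at G x0 u \in sites G.
  have := Hrider u; rewrite mem_present // => /andP[Hi /eqP <-].
  exact: pos_sites.
pose done_at t := n <= size (undup (map fst (history G x0 t))).
have HT : done_at T.
  rewrite /done_at -G_sites /nsites; apply: uniq_leq_size; first by case: G_wf.
  by move=> y /Hseen [u Hu' <-]; rewrite mem_undup; apply/mem_history; exists u.
case: (ex_minnP (ex_intro done_at T HT)) => T' HT' Hmin.
exists T', (history G x0 T'), (site_at G x0 T'); split.
- apply: run_explorer => // u Hu'; rewrite ltnNge; apply/negP => Hdone.
  by move: (Hmin u Hdone); rewrite leqNgt Hu'.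
- by move: HT'; rewrite /explorer /done_at /history => ->.
- have Hsub : {subset undup (map fst (history G x0 T')) <= sites G}.
    by move=> z; rewrite mem_undup => /mem_history [u _ <-]; apply: Hsite.
  have Hsize : size (sites G) <= size (undup (map fst (history G x0 T'))).
    by move: HT'; rewrite /done_at -G_sites.
  have [_ Heq] := uniq_min_size (undup_uniq _) Hsub Hsize.
  by move=> y Hy; rewrite -mem_undup Heq.
- exact: Hmin.
Qed.

Hypothesis G_feasible : feasible G.

Lemma explorer_bound B : meet_bound G B -> x0 \in start G ->
  explores_within G (explorer n) x0 (44 * ncarriers G * B).
Proof.
move=> HB /mapP[c0 Hc0 Hx0]; have Hu : uniq (ids G) by case: G_wf.
have Hi0 : cid c0 \in ids G by apply: map_f.
have Hpos0 : pos G (cid c0) 0 = x0 by rewrite /pos carrier_ofE.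
have Hwalk := G_feasible Hc0; rewrite -Hx0 -Hpos0 in Hwalk.
have [L [HL _ _ HLB]] := HB _ _ Hi0 Hi0.
have Inv := inv_all Hu HB Hwalk Hi0 Hpos0 (leq_trans HL HLB).
have Hbound : 44 * ncarriers G * B = 44 * size (ids G) * B by rewrite /ids size_map.
rewrite Hbound; apply: explores_when_all_seen.
- by move=> u; rewrite mem_present // (inv_rider (Inv u)) (inv_on_rider (Inv u)) eqxx.
- case: (inv_seen (Inv (44 * size (ids G) * B))) => // Hsmall.
  by have := time_bound (Inv _) Hsmall; rewrite ltnn.
Qed.

End Exploration.

Theorem mainTheorem10 :
  (exists C0 : nat, forall n : nat, 1 <= n ->
     exists A : algorithm, forall G : pvsys,
       wf_pvsys G -> nsites G = n -> feasible G ->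
       solves_within G A (C0 * ncarriers G * period G ^ 2))
  /\
  (exists C0 : nat, forall n : nat, 1 <= n ->
     exists A : algorithm, forall G : pvsys,
       wf_pvsys G -> homogeneous G -> nsites G = n -> feasible G ->
       solves_within G A (C0 * ncarriers G * period G)).
Proof.
split; exists 44 => n _; exists (explorer n).
- move=> G Hwf Hn Hfe x0; exact: explorer_bound (meet_bound_square Hwf).
- move=> G Hwf Hhom Hn Hfe x0; exact: explorer_bound (meet_bound_homogeneous Hwf Hhom).
Qed.
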